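(* Let $T$ be a rooted tree. (i) $I_1(T)>I_0(T)$. (ii) If $v$ is a leaf of $T$, then $3I_v(T)\ge I(T)+2$. (iii) If $v$ and $w$ are distinct leaves of $T$, then $3I_{vw}(T)\ge I_v(T)$.
   Context: A rooted tree $T$ is a finite tree with a distinguished vertex, its root (a one-vertex tree's root counts as a leaf). For vertices $u,v$, the infimum of $u$ and $v$ is the vertex common to the path from $u$ to the root and the path from $v$ to the root that is furthest from the root. A set $X\subseteq V(T)$ is infima closed if the infimum of any two elements of $X$ lies in $X$. $I(T)$ denotes the number of nonempty infima closed subsets of $V(T)$; $I_0(T)$ the number of nonempty infima closed sets not containing the root; $I_1(T)$ the number of infima closed sets containing the root; $I_v(T)$ the number of infima closed sets containing vertex $v$; $I_{vw}(T)$ the number containing both $v$ and $w$. *)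

(* A rooted tree on a finite vertex type V is given by a root
   r and a parent map par : V -> V with par r = r and every vertex reaching
   r by iterating par (so there are no other cycles). *)
From mathcomp Require Import all_boot.
Set Implicit Arguments. Unset Strict Implicit. Unset Printing Implicit Defensive.

Section RootedTree.
Variables (V : finType) (r : V) (par : V -> V).

(* u lies on the path from v to the root  <=>  fconnect par v u *)
Definition is_rooted_tree : Prop := par r = r /\ forall v : V, fconnect par v r.

Definition is_inf (x y w : V) : bool :=
  [&& fconnect par x w, fconnect par y w &
      [forall z, (fconnect par x z && fconnect par y z) ==> fconnect par w z]].

Definition infclosed (X : {set V}) : bool :=
  [forall x in X, forall y in X, forall w, is_inf x y w ==> (w \in X)].

(* leaf: no children (the root of a one-vertex tree is a leaf) *)
Definition is_leaf (v : V) : bool := [forall u, (u != r) ==> (par u != v)].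

Definition I_all : nat := #|[set X : {set V} | (X != set0) && infclosed X]|.
Definition I_0 : nat :=
  #|[set X : {set V} | [&& X != set0, r \notin X & infclosed X]]|.
Definition I_1 : nat := #|[set X : {set V} | (r \in X) && infclosed X]|.
Definition I_v (v : V) : nat := #|[set X : {set V} | (v \in X) && infclosed X]|.
Definition I_vw (v w : V) : nat :=
  #|[set X : {set V} | [&& v \in X, w \in X & infclosed X]]|.
End RootedTree.

From mathcomp Require Import all_boot.
From mathcomp Require Import zify.
Set Implicit Arguments. Unset Strict Implicit. Unset Printing Implicit Defensive.

(* Write y >= x ("y is an ancestor of x") for fconnect par x y.  In a rooted
   tree this is a partial order whose down-sets are chains, and the infimum of
   a and b is their lowest common ancestor.

   (i) X |-> X + {r} injects the nonempty inf-closed sets avoiding the root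
   into the inf-closed sets containing the root other than {r}.

   (ii), (iii) rest on one construction.  For a vertex w and a nonempty
   inf-closed X with w 
otin X, let u be the lowest ancestor of w that is an
   ancestor of some element of X (the point where w "attaches" to X).  Then
   extend X = X + {w, u} is again inf-closed, and X is recovered from
   extend X and the bit [u \in X \/ u = w]: it is extend X - w or
   extend X - w - u, and two sets of the second kind with the same extension
   must share the same u.  Hence extension is at most two-to-one
   (card_extension_le).  Applied with w := v to the sets not containing v
   this gives I(T) <= 3 I_v(T) - 2, and applied with w to the sets containing
   v but not w it gives I_v(T) <= 3 I_vw(T).  Neither bound needs v or w to be
   a leaf, so they are proved for arbitrary vertices. *)

Lemma setU2_recover (T : finType) (w u : T) (X : {set T}) :
  w \notin X -> X != (w |: (u |: X)) :\ w ->
  [/\ u \notin X, u != w & X = (w |: (u |: X)) :\ w :\ u].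
Proof.
move=> wX flag; have [uX uw] : u \notin X /\ u != w.
  apply/andP; apply: contraR flag; rewrite negb_and !negbK => u_old.
  apply/eqP/setP=> x; rewrite !inE; case: (eqVneq x w) => [-> | xw] /=.
    exact: negbTE.
  case: (eqVneq x u) => [xu | _] //=; subst x.
  by case/orP: u_old => [-> | /eqP uw] //; rewrite uw eqxx in xw.
split=> //; apply/setP=> x; rewrite !inE.
case: (eqVneq x u) => [-> | _] /=; first exact: negbTE.
by case: (eqVneq x w) => [-> | _] //=; apply: negbTE.
Qed.

Section RootedTreeFacts.
Variables (V : finType) (r : V) (par : V -> V).

Lemma fconnect_total (x y z : V) :
  fconnect par x y -> fconnect par x z -> fconnect par y z || fconnect par z y.
Proof.
move=> /iter_findex <- /iter_findex <-.
set a := findex _ _ _; set b := findex _ _ _.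
case: (leqP a b) => [le_ab|/ltnW le_ba].
  by rewrite -(subnK le_ab) iterD fconnect_iter.
by rewrite -(subnK le_ba) iterD fconnect_iter orbT.
Qed.

Lemma is_inf_sym (x y c : V) : is_inf par x y c -> is_inf par y x c.
Proof.
case/and3P=> xc yc /forallP low; apply/and3P; split=> //; apply/forallP=> z.
by rewrite andbC; exact: low.
Qed.

Lemma is_infP (x y c : V) :
  reflect [/\ fconnect par x c, fconnect par y c &
             forall z, fconnect par x z -> fconnect par y z -> fconnect par c z]
          (is_inf par x y c).
Proof.
apply: (iffP and3P) => [[xc yc /forallP low]|[xc yc low]]; split=> //.
  by move=> z xz yz; apply: (implyP (low z)); rewrite xz.
by apply/forallP=> z; apply/implyP=> /andP[]; exact: low.
Qed.

Lemma infclosedP (X : {set V}) :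
  reflect (forall a b c, a \in X -> b \in X -> is_inf par a b c -> c \in X)
          (infclosed par X).
Proof.
apply: (iffP forall_inP) => [cl a b c aX bX abc|cl a aX].
  by move/forall_inP: (cl a aX) => /(_ b bX) /forallP /(_ c) /implyP; apply.
by apply/forall_inP=> b bX; apply/forallP=> c; apply/implyP; exact: cl.
Qed.

Hypothesis tree : is_rooted_tree r par.

Lemma iter_root j : iter j par r = r.
Proof. by case: tree => root_fix _; elim: j => //= j ->. Qed.

Lemma periodic_is_root (x : V) p : 0 < p -> iter p par x = x -> x = r.
Proof.
move=> p_gt0 per_x; have [_ /(_ x) /iter_findex] := tree; set k := findex _ _ _ => xk.
have per_kx : iter (p * k) par x = x.
  by elim: k {xk} => [|k IHk]; rewrite ?muln0 // mulnS iterD IHk.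
by rewrite -per_kx -(subnK (leq_pmull k p_gt0)) iterD xk iter_root.
Qed.

Lemma fconnect_antisym (x y : V) : fconnect par x y -> fconnect par y x -> x = y.
Proof.
move=> /iter_findex <-; set n := findex _ _ _ => /iter_findex.
set m := findex _ _ _ => cyc; have per_x : iter (m + n) par x = x by rewrite iterD.
case: (posnP (m + n)) => [/eqP|mn_gt0]; first by rewrite addn_eq0 => /andP[_ /eqP->].
by rewrite (periodic_is_root mn_gt0 per_x) iter_root.
Qed.

Lemma is_inf_ancestor (a b c : V) : fconnect par a b -> is_inf par a b c -> c = b.
Proof.
move=> ab /is_infP[_ bc low].
by apply: (fconnect_antisym _ bc); apply: low; rewrite ?connect0.
Qed.

Lemma infclosed_set1 (x : V) : infclosed par [set x].
Proof.
apply/infclosedP=> a b c; rewrite !inE => /eqP-> /eqP->.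
by move/(is_inf_ancestor (connect0 _ _))->.
Qed.

Lemma infclosed_setU1_root (X : {set V}) : infclosed par X -> infclosed par (r |: X).
Proof.
have inf_root a b c : a = r \/ b = r -> is_inf par a b c -> c = r.
  have [_ to_root] := tree.
  by case=> -> /is_infP[ac bc _]; apply: fconnect_antisym (to_root c) _.
move/infclosedP=> clX; apply/infclosedP=> a b c; rewrite !inE.
case/predU1P=> [ar|aX] /predU1P[br|bX] abc; try by rewrite (inf_root a b c) ?eqxx //; tauto.
by rewrite (clX _ _ _ aX bX abc) orbT.
Qed.

Lemma is_inf_lift (a u b c : V) :
  fconnect par a u -> fconnect par u c -> is_inf par a b c -> is_inf par u b c.
Proof.
move=> au uc /is_infP[_ bc low]; apply/is_infP; split=> // z uz bz.
by apply: low (connect_trans au uz) bz.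
Qed.

(* If u is an ancestor of a member x0 of an inf-closed X, then inf(u, b) for
   b in X is u itself or lies in X: either b lies below u, or the infimum
   equals inf(x0, b). *)
Lemma inf_attach_mem (X : {set V}) (u x0 b c : V) :
  infclosed par X -> x0 \in X -> fconnect par x0 u -> b \in X ->
  is_inf par u b c -> (c == u) || (c \in X).
Proof.
move=> /infclosedP clX x0X x0u bX ubc.
case bu: (fconnect par b u).
  by rewrite (is_inf_ancestor bu (is_inf_sym ubc)) eqxx.
apply/orP; right; apply: (clX x0 b c) => //.
have /is_infP[uc bc low] := ubc; apply/is_infP; split=> [||z x0z bz].
- exact: connect_trans x0u uc.
- exact: bc.
- case/orP: (fconnect_total x0u x0z) => [uz|zu]; first exact: low.
  by rewrite (connect_trans bz zu) in bu.
Qed.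
End RootedTreeFacts.

Section Attachment.
Variables (V : finType) (r : V) (par : V -> V) (w : V).
Hypothesis tree : is_rooted_tree r par.

Definition attaches (X : {set V}) (u : V) : bool :=
  [&& fconnect par w u, [exists x in X, fconnect par x u] &
      [forall x in X, forall c,
         (fconnect par w c && fconnect par x c) ==> fconnect par u c]].

Lemma attachesP (X : {set V}) (u : V) :
  reflect [/\ fconnect par w u, exists2 x, x \in X & fconnect par x u &
             forall x c, x \in X -> fconnect par w c -> fconnect par x c ->
                         fconnect par u c]
          (attaches X u).
Proof.
apply: (iffP and3P) => [[wu /exists_inP[x xX xu] /forall_inP low]|[wu [x xX xu] low]].
  split=> [||y c yX wc yc]; [done | by exists x|].
  by move/forallP: (low y yX) => /(_ c) /implyP; apply; rewrite wc.
split=> //; first by apply/exists_inP; exists x.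
apply/forall_inP=> y yX; apply/forallP=> c; apply/implyP=> /andP[]; exact: low.
Qed.

(* Every nonempty X has an attachment point: the first iterate of par from w
   that is an ancestor of a member of X. *)
Lemma attach_exists (X : {set V}) : X != set0 -> exists u, attaches X u.
Proof.
case/set0Pn=> x0 x0X; have [_ to_root] := tree.
have meets : exists j, [exists x in X, fconnect par x (iter j par w)].
  exists (findex par w r); apply/exists_inP; exists x0 => //.
  by rewrite iter_findex.
case: (ex_minnP meets) => k /exists_inP[x xX xk] k_min.
exists (iter k par w); apply/attachesP; split=> [||y c yX /iter_findex wc yc].
- exact: fconnect_iter.
- by exists x.
- have le_kj : k <= findex par w c.
    by apply: k_min; apply/exists_inP; exists y; rewrite ?wc.
  by rewrite -wc -(subnK le_kj) iterD fconnect_iter.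
Qed.

Definition extend (X : {set V}) : {set V} :=
  if [pick u | attaches X u] is Some u then w |: (u |: X) else w |: X.

Lemma extendE (X : {set V}) :
  X != set0 -> exists2 u, attaches X u & extend X = w |: (u |: X).
Proof.
move=> X_neq0; rewrite /extend; case: pickP => [u ? | none]; first by exists u.
by have [u] := attach_exists X_neq0; rewrite none.
Qed.

(* Infima among {w, u} are trivial since
   u >= w; the infimum of w with b in X lies above u (minimality of u), hence
   is inf(u, b), which is u or in X by inf_attach_mem. *)
Lemma infclosed_extend (X : {set V}) :
  X != set0 -> infclosed par X -> infclosed par (extend X).
Proof.
move=> X_neq0 clX; have [u /attachesP[wu [x0 x0X x0u] low] ->] := extendE X_neq0.
set Y := w |: (u |: X).
have split_Y z : z \in Y -> (z == w) || (z == u) || (z \in X) by rewrite !inE orbA.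
have inf_comparable a b c : a \in Y -> b \in Y ->
    fconnect par a b || fconnect par b a -> is_inf par a b c -> c \in Y.
  move=> aY bY /orP[ab | ba] abc.
    by rewrite (is_inf_ancestor tree ab abc).
  by rewrite (is_inf_ancestor tree ba (is_inf_sym abc)).
have inf_new a b c : (a == w) || (a == u) -> b \in Y -> is_inf par a b c -> c \in Y.
  move=> a_new bY abc; have aY : a \in Y by rewrite !inE orbA a_new.
  case/orP: (split_Y b bY) => [b_new | bX].
    apply: (inf_comparable a b) => //.
    by case/orP: a_new => /eqP->; case/orP: b_new => /eqP->; rewrite ?connect0 ?wu ?orbT.
  have ubc : is_inf par u b c.
    case/orP: a_new => /eqP a_eq; rewrite a_eq in abc => //.
    have /is_infP[wc bc _] := abc.
    exact: is_inf_lift wu (low b c bX wc bc) abc.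
  by rewrite !inE; case/orP: (inf_attach_mem tree clX x0X x0u bX ubc) => ->; rewrite !orbT.
apply/infclosedP=> a b c aY bY abc.
case/orP: (split_Y a aY) => [a_new | aX]; first exact: inf_new a_new bY abc.
case/orP: (split_Y b bY) => [b_new | bX]; first exact: inf_new b_new aY (is_inf_sym abc).
by rewrite !inE (infclosedP _ _ clX a b c aX bX abc) !orbT.
Qed.

(* An inf-closed X containing a vertex u' between w and its attachment point
   u contains u as well, namely as inf(x, u') for x in X below u. *)
Lemma attach_mem (X : {set V}) (u u' : V) :
  infclosed par X -> attaches X u -> u' \in X ->
  fconnect par w u' -> fconnect par u' u -> u \in X.
Proof.
move=> /infclosedP clX /attachesP[_ [x xX xu] low] u'X wu' u'u.
apply: (clX x u') => //; apply/is_infP; split=> // z xz u'z.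
exact: low xX (connect_trans wu' u'z) xz.
Qed.

(* Extension is injective on nonempty inf-closed sets avoiding w once the bit
   [X == extend X :\ w] is recorded: two distinct attachment points with the
   same extension would contradict attach_mem. *)
Lemma extend_inj (X1 X2 : {set V}) :
  [&& X1 != set0, w \notin X1 & infclosed par X1] ->
  [&& X2 != set0, w \notin X2 & infclosed par X2] ->
  extend X1 = extend X2 ->
  (X1 == extend X1 :\ w) = (X2 == extend X2 :\ w) -> X1 = X2.
Proof.
move=> /and3P[ne1 w1 cl1] /and3P[ne2 w2 cl2] sameY.
have [u1 att1 E1] := extendE ne1; have [u2 att2 E2] := extendE ne2.
case: eqP => [-> | /eqP flag1]; case: eqP => [-> | /eqP flag2] // _; first by rewrite sameY.
rewrite E1 in flag1 sameY; rewrite E2 in flag2 sameY.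
have [u1X1 u1w X1E] := setU2_recover w1 flag1.
have [u2X2 u2w X2E] := setU2_recover w2 flag2.
case: (eqVneq u1 u2) => [u12 | u12]; first by rewrite X1E X2E sameY u12.
have u2X1 : u2 \in X1 by rewrite X1E sameY !inE u2w eq_sym u12 eqxx orbT.
have u1X2 : u1 \in X2 by rewrite X2E -sameY !inE u1w u12 eqxx orbT.
have [/and3P[wu1 _ _] /and3P[wu2 _ _]] := (att1, att2).
case/orP: (fconnect_total wu1 wu2) => [u1u2 | u2u1].
- by rewrite (attach_mem cl2 att2 u1X2 wu1 u1u2) in u2X2.
- by rewrite (attach_mem cl1 att1 u2X1 wu2 u2u1) in u1X1.
Qed.

Lemma card_extension_le (A B : {set {set V}}) :
  (forall X, X \in A -> [&& X != set0, w \notin X & infclosed par X]) ->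
  (forall X, X \in A -> extend X \in B) -> #|A| <= 2 * #|B|.
Proof.
move=> A_ok AB; pose code X := (extend X, X == extend X :\ w).
have code_inj : {in A &, injective code}.
  by move=> X1 X2 /A_ok ok1 /A_ok ok2 [sameY sameflag]; apply: extend_inj.
rewrite -(card_in_imset code_inj) mulnC -(card_bool) -cardsT -cardsX.
by apply: subset_leq_card; apply/subsetP=> _ /imsetP[X XA ->]; rewrite !inE AB.
Qed.
End Attachment.

Section Counting.
Variables (V : finType) (r : V) (par : V -> V).
Hypothesis tree : is_rooted_tree r par.

(* Part (i): X |-> r |: X injects the sets counted by I_0 into those counted
   by I_1 minus the singleton {r}. *)
Lemma I_0_lt_I_1 : I_0 r par < I_1 r par.
Proof.
rewrite /I_0 /I_1; set A := [set X | _]; set S := [set X | _].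
have add_root_inj : {in A &, injective (fun X : {set V} => r |: X)}.
  move=> X1 X2; rewrite !inE => /and3P[_ r1 _] /and3P[_ r2 _] same.
  by rewrite -(setU1K r1) same setU1K.
have root_S : [set r] \in S by rewrite inE set11 (infclosed_set1 tree).
have img_S : [set r |: X | X in A] \subset S :\ [set r].
  apply/subsetP=> _ /imsetP[X + ->]; rewrite !inE => /and3P[/set0Pn[x xX] rX clX].
  rewrite eqxx /= (infclosed_setU1_root tree) // andbT.
  move: rX; apply: contraNneq => /setP/(_ x).
  by rewrite !inE xX orbT => /esym/eqP <-.
have := subset_leq_card img_S.
by rewrite (card_in_imset add_root_inj) (cardsD1 [set r] S) root_S.
Qed.

(* Part (ii), for every vertex v: the sets avoiding v extend to sets
   containing v other than {v}, so I - I_v <= 2 (I_v - 1). *)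
Lemma I_all_le_I_v (v : V) : I_all par + 2 <= 3 * I_v par v.
Proof.
rewrite /I_all /I_v; set T := [set X | _]; set S := [set X | _].
set A := [set X : {set V} | [&& X != set0, v \notin X & infclosed par X]].
have T_split : #|T| = #|S| + #|A|.
  rewrite -(cardsID [set X : {set V} | v \in X] T); congr (_ + _); apply: eq_card => X;
    rewrite !inE; case vX: (v \in X); rewrite ?andbF ?andbT //=.
  by apply/andP/idP => [[] | clX]; last (split=> //; apply/set0Pn; exists v).
have v_S : [set v] \in S by rewrite inE set11 (infclosed_set1 tree).
have A_le : #|A| <= 2 * #|S :\ [set v]|.
  apply: (@card_extension_le _ _ _ v tree) => [X | X]; rewrite inE // => /and3P[ne vX clX].
  have [u _ ext] := extendE v tree ne; have [x xX] := set0Pn _ ne.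
  rewrite !inE (infclosed_extend _ tree) // ext setU11 /= andbT.
  by move: vX; apply: contraNneq => /setP/(_ x); rewrite !inE xX !orbT => /esym/eqP <-.
by move: A_le; rewrite T_split (cardsD1 [set v] S) v_S; lia.
Qed.

(* Part (iii), for every pair v, w: the sets containing v but not w extend to
   sets containing both, so I_v - I_vw <= 2 I_vw. *)
Lemma I_v_le_I_vw (v w : V) : I_v par v <= 3 * I_vw par v w.
Proof.
rewrite /I_v /I_vw; set S := [set X | _]; set B := [set X | _].
set A := [set X : {set V} | [&& v \in X, w \notin X & infclosed par X]].
have S_split : #|S| = #|B| + #|A|.
  rewrite -(cardsID [set X : {set V} | w \in X] S); congr (_ + _); apply: eq_card => X;
    by rewrite !inE; case: (v \in X); case: (w \in X); case: (infclosed par X).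
have A_le : #|A| <= 2 * #|B|.
  apply: (@card_extension_le _ _ _ w tree) => X; rewrite inE => /and3P[vX wX clX].
    by rewrite wX clX /= andbT; apply/set0Pn; exists v.
  have ne : X != set0 by apply/set0Pn; exists v.
  have [u _ ext] := extendE w tree ne.
  by rewrite inE (infclosed_extend _ tree) // ext !inE vX eqxx !orbT.
by rewrite S_split; lia.
Qed.
End Counting.

Theorem lemma2p4 (V : finType) (r : V) (par : V -> V) :
  is_rooted_tree r par ->
  [/\ I_0 r par < I_1 r par,
      forall v : V, is_leaf r par v -> 3 * I_v par v >= I_all par + 2
    & forall v w : V, is_leaf r par v -> is_leaf r par w -> v != w ->
        3 * I_vw par v w >= I_v par v].
Proof.
move=> tree; split=> [|v _|v w _ _ _].
- exact (I_0_lt_I_1 tree).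
- exact (I_all_le_I_v tree v).
- exact (I_v_le_I_vw tree v w).
Qed.
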